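(* Let $f\in C^\infty(\mathbb{R}^2)$ be a real-valued function whose zero set $\{x\in\mathbb{R}^2: f(x)=0\}$ is exactly the Hawaiian earring \[ \mathcal H=\bigcup_{k=1}^{\infty}\left\{(x,y)\in\mathbb{R}^2:\left(x-\tfrac1k\right)^2+y^2=\tfrac1{k^2}\right\}. \] Then $f$ is flat at the origin (all partial derivatives of all orders of $f$ vanish at $0$), and $f$ does not satisfy a Łojasiewicz inequality with respect to $\mathcal H$ at $0$: there exist no constants $C>0$ and $\theta>0$ such that \[ |f(x)|\ge C\,\mathrm{dist}(x,\mathcal H)^\theta \] for all $x$ in a neighborhood of $0$.
   Context: $\mathrm{dist}(x,\mathcal H)$ denotes the Euclidean distance from $x$ to the set $\mathcal H$. *)

From Stdlib Require Import Reals Lra List.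
From Coquelicot Require Import Coquelicot.
Open Scope R_scope.

(* Iterated partial derivatives of f : R^2 -> R (curried).  A direction
   [true] means d/dx, [false] means d/dy; the head of the list is applied last. *)
Fixpoint pderiv (l : list bool) (f : R -> R -> R) : R -> R -> R :=
  match l with
  | nil => f
  | b :: l' =>
      let g := pderiv l' f in
      if b then (fun x y => Derive (fun t => g t y) x)
           else (fun x y => Derive (fun t => g x t) y)
  end.

Definition continuous2 (g : R -> R -> R) (x0 y0 : R) : Prop :=
  forall eps, 0 < eps -> exists delta, 0 < delta /\
    forall x y, sqrt ((x - x0) ^ 2 + (y - y0) ^ 2) < delta ->
      Rabs (g x y - g x0 y0) < eps.

Definition smooth2 (f : R -> R -> R) : Prop :=
  forall l : list bool, forall x y,
    ex_derive (fun t => pderiv l f t y) x /\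
    ex_derive (fun t => pderiv l f x t) y /\
    continuous2 (pderiv l f) x y.

Definition hawaiian (x y : R) : Prop :=
  exists k : nat, (1 <= k)%nat /\
    (x - / INR k) ^ 2 + y ^ 2 = / (INR k) ^ 2.

Definition dist_H (x y : R) : R :=
  real (Glb_Rbar (fun d => exists a b, hawaiian a b /\
                      d = sqrt ((x - a) ^ 2 + (y - b) ^ 2))).

(* d^theta for d >= 0, theta > 0, with the convention 0^theta = 0. *)
Definition rpow0 (d theta : R) : R :=
  if Rle_dec d 0 then 0 else Rpower d theta.

From Stdlib Require Import Reals List.
From Coquelicot Require Import Coquelicot.
From Stdlib Require Import Lra Lia FunctionalExtensionality.
Open Scope R_scope.

(* Each line y = t x meets the k-th circle of the earring at x = 2 / (k (1 + t^2)), so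
   s |-> f (s, s t) has zeros accumulating at 0 and, by Rolle's theorem, all its derivatives
   vanish at 0.  By the chain rule and the symmetry of mixed partials, its n-th derivative at 0
   is sum_j C(n, j) (d_x^(n-j) d_y^j f)(0, 0) t^j; this polynomial vanishes for every t > 0, so
   all partial derivatives of order n vanish at the origin.  On the negative x-axis the distance
   to the earring is |x|, whereas flatness gives |f (x, 0)| <= |x|^N near 0 for every N, which is
   incompatible with |f| >= C dist^theta. *)

Definition zeros_cluster_at_0 (g : R -> R) : Prop :=
  forall eps, 0 < eps -> exists z, 0 < z < eps /\ g z = 0.

Lemma zeros_cluster_at_0_derive (g g' : R -> R) :
  (forall r, is_derive g r (g' r)) ->
  zeros_cluster_at_0 g -> zeros_cluster_at_0 g'.
Proof.
  intros Hg Hz eps Heps.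
  destruct (Hz eps Heps) as [z1 [Hz1 E1]].
  destruct (Hz z1 (proj1 Hz1)) as [z2 [Hz2 E2]].
  destruct (MVT_cor2 g g' z2 z1) as [c [Hc Hc']]; [lra | |].
  - intros c _. apply is_derive_Reals, Hg.
  - exists c. split; [lra |].
    rewrite E1, E2 in Hc.
    assert (Hprod : g' c * (z1 - z2) = 0) by lra.
    apply Rmult_integral in Hprod as [? | ?]; [assumption | lra].
Qed.

Lemma zeros_cluster_at_0_eq0 (g : R -> R) :
  continuity_pt g 0 -> zeros_cluster_at_0 g -> g 0 = 0.
Proof.
  intros Hc Hz. destruct (Req_dec (g 0) 0) as [| Hne]; [assumption |].
  destruct (Hc (Rabs (g 0)) (Rabs_pos_lt _ Hne)) as [d [Hd Hnear]].
  destruct (Hz d Hd) as [z [Hz0 Ez]].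
  assert (Hgz : R_dist (g z) (g 0) < Rabs (g 0)).
  { apply Hnear. split; [split; [exact I | lra] |].
    simpl; unfold R_dist. rewrite Rminus_0_r, Rabs_right; lra. }
  unfold R_dist in Hgz. rewrite Ez, Rminus_0_l, Rabs_Ropp in Hgz. lra.
Qed.

Definition derivable_all_orders (g : R -> R) : Prop :=
  forall n x, ex_derive (Derive_n g n) x.

Section DerivableAllOrders.

Variable g : R -> R.
Hypothesis g_smooth : derivable_all_orders g.

Lemma is_derive_Derive_n n x : is_derive (Derive_n g n) x (Derive_n g (S n) x).
Proof. exact (Derive_correct _ _ (g_smooth n x)). Qed.

Lemma continuity_pt_Derive_n n x : continuity_pt (Derive_n g n) x.
Proof. apply derivable_continuous_pt, ex_derive_Reals_0, g_smooth. Qed.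

Lemma Derive_n_0_of_zeros_cluster :
  zeros_cluster_at_0 g -> forall n, Derive_n g n 0 = 0.
Proof.
  intros Hz n. apply zeros_cluster_at_0_eq0; [apply continuity_pt_Derive_n |].
  induction n as [| n IH]; [exact Hz |].
  exact (zeros_cluster_at_0_derive _ _ (is_derive_Derive_n n) IH).
Qed.

End DerivableAllOrders.

Lemma abs_le_pow_S_of_derive (G G' : R -> R) d i :
  (forall r, is_derive G r (G' r)) -> G 0 = 0 ->
  (forall u, Rabs u < d -> Rabs (G' u) <= Rabs u ^ i) ->
  forall u, Rabs u < d -> Rabs (G u) <= Rabs u ^ S i.
Proof.
  intros HG HG0 HG' u Hu.
  destruct (MVT_abs G G' u 0) as [c [Hc Hcu]].
  { intros c _. apply is_derive_Reals, HG. }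
  rewrite HG0, Rminus_0_l, Rabs_Ropp, Rminus_0_l, Rabs_Ropp in Hc.
  assert (Habs_c : Rabs c <= Rabs u).
  { pose proof (Rmin_l u 0); pose proof (Rmin_r u 0).
    pose proof (Rmax_l u 0); pose proof (Rmax_r u 0).
    destruct (Rle_or_lt 0 u);
      [rewrite Rmin_right, Rmax_left in Hcu by lra | rewrite Rmin_left, Rmax_right in Hcu by lra];
      unfold Rabs; repeat destruct Rcase_abs; lra. }
  assert (Hc' : Rabs (G' c) <= Rabs c ^ i) by (apply HG'; lra).
  assert (Hpow : Rabs c ^ i <= Rabs u ^ i) by (apply pow_incr; split; [apply Rabs_pos | exact Habs_c]).
  rewrite Hc. simpl. pose proof (Rabs_pos u); pose proof (Rabs_pos (G' c)). nra.
Qed.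

Lemma flat_pow_bound (g : R -> R) :
  derivable_all_orders g -> (forall n, Derive_n g n 0 = 0) ->
  forall N, exists d, 0 < d /\ forall u, Rabs u < d -> Rabs (g u) <= Rabs u ^ N.
Proof.
  intros Hg Hflat N.
  destruct (continuity_pt_Derive_n g Hg N 0 1 Rlt_0_1) as [d [Hd Hnear]].
  exists d. split; [exact Hd |].
  assert (Hbound : forall i, (i <= N)%nat ->
            forall u, Rabs u < d -> Rabs (Derive_n g (N - i) u) <= Rabs u ^ i).
  { induction i as [| i IH]; intros Hi u Hu.
    - rewrite Nat.sub_0_r. simpl.
      destruct (Req_dec u 0) as [-> | Hne]; [rewrite Hflat, Rabs_R0; lra |].
      assert (Hdist : R_dist (Derive_n g N u) (Derive_n g N 0) < 1).
      { apply Hnear. split; [split; [exact I | auto] |]. simpl; unfold R_dist. rewrite Rminus_0_r. exact Hu. }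
      unfold R_dist in Hdist. rewrite Hflat, Rminus_0_r in Hdist. lra.
    - apply (abs_le_pow_S_of_derive _ (Derive_n g (N - i)) d); auto.
      + intros r. replace (N - i)%nat with (S (N - S i)) by lia. apply is_derive_Derive_n, Hg.
      + intros v Hv. apply IH; [lia | exact Hv]. }
  intros u Hu. specialize (Hbound N (le_n N) u Hu). rewrite Nat.sub_diag in Hbound. exact Hbound.
Qed.

Lemma sqrt_sum_sqr_le_abs (a b : R) : sqrt (a ^ 2 + b ^ 2) <= Rabs a + Rabs b.
Proof.
  pose proof (Rabs_pos a); pose proof (Rabs_pos b).
  rewrite <- (sqrt_pow2 (Rabs a + Rabs b)) by lra.
  apply sqrt_le_1_alt. rewrite <- (pow2_abs a), <- (pow2_abs b). nra.
Qed.

Lemma continuous2_continuity_2d_pt (g : R -> R -> R) x y :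
  continuous2 g x y -> continuity_2d_pt g x y.
Proof.
  intros Hg eps. destruct (Hg eps (cond_pos eps)) as [d [Hd Hnear]].
  assert (Hd2 : 0 < d / 2) by lra.
  exists (mkposreal _ Hd2). intros u v Hu Hv. simpl in Hu, Hv.
  apply Hnear. eapply Rle_lt_trans; [apply sqrt_sum_sqr_le_abs | lra].
Qed.

Lemma is_derive_remainder (h : R -> R) x l eps :
  is_derive h x l -> 0 < eps ->
  exists d, 0 < d /\
    forall y, Rabs (y - x) < d -> Rabs (h y - h x - l * (y - x)) <= eps * Rabs (y - x).
Proof.
  intros Hh Heps. apply is_derive_Reals in Hh.
  destruct (Hh eps Heps) as [d Hd]. exists d. split; [apply cond_pos |].
  intros y Hy. destruct (Req_dec y x) as [-> | Hne].
  - rewrite !Rminus_diag, Rmult_0_r, Rminus_0_r, Rabs_R0. lra.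
  - assert (Hyx : y - x <> 0) by lra.
    specialize (Hd (y - x) Hyx Hy). replace (x + (y - x)) with y in Hd by ring.
    replace (h y - h x - l * (y - x)) with (((h y - h x) / (y - x) - l) * (y - x)) by (field; exact Hyx).
    rewrite Rabs_mult. apply Rmult_le_compat_r; [apply Rabs_pos | lra].
Qed.

(* Continuity of one partial derivative suffices: the x-increment is controlled by the mean value
   theorem and the continuity of d/dx, the y-increment by the derivative along x = x0. *)
Lemma differentiable_pt_lim_of_partials (g : R -> R -> R) x0 y0 ly :
  (forall u v, ex_derive (fun s => g s v) u) ->
  continuous2 (fun u v => Derive (fun s => g s v) u) x0 y0 ->
  is_derive (fun v => g x0 v) y0 ly ->
  differentiable_pt_lim g x0 y0 (Derive (fun s => g s y0) x0) ly.
Proof.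
  intros Hx Hcx Hy eps.
  set (lx := Derive (fun s => g s y0) x0).
  assert (He2 : 0 < eps / 2) by (pose proof (cond_pos eps); lra).
  destruct (Hcx _ He2) as [d1 [Hd1 Hnear]].
  destruct (is_derive_remainder _ _ _ _ Hy He2) as [d2 [Hd2 Hrem]].
  assert (Hd : 0 < Rmin (d1 / 2) d2) by (apply Rmin_pos; lra).
  exists (mkposreal _ Hd). intros u v Hu Hv. simpl in Hu, Hv.
  pose proof (Rmin_l (d1 / 2) d2); pose proof (Rmin_r (d1 / 2) d2).
  destruct (MVT_cor4 (fun s => g s v) (fun s => Derive (fun s' => g s' v) s) x0 (Rabs (u - x0)))
    with (b := u) as [c [Hc Hcu]]; [intros c _; apply Derive_correct, Hx | lra |].
  assert (Hslope : Rabs (Derive (fun s => g s v) c - lx) < eps / 2).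
  { apply Hnear. eapply Rle_lt_trans; [apply sqrt_sum_sqr_le_abs | lra]. }
  assert (Hincr_x : Rabs (g u v - g x0 v - lx * (u - x0)) <= eps / 2 * Rabs (u - x0)).
  { rewrite Hc. replace (Derive (fun s => g s v) c * (u - x0) - lx * (u - x0))
      with ((Derive (fun s => g s v) c - lx) * (u - x0)) by ring.
    rewrite Rabs_mult. apply Rmult_le_compat_r; [apply Rabs_pos | lra]. }
  assert (Hincr_y : Rabs (g x0 v - g x0 y0 - ly * (v - y0)) <= eps / 2 * Rabs (v - y0))
    by (apply Hrem; lra).
  replace (g u v - g x0 y0 - (lx * (u - x0) + ly * (v - y0))) with
    ((g u v - g x0 v - lx * (u - x0)) + (g x0 v - g x0 y0 - ly * (v - y0))) by ring.
  eapply Rle_trans; [apply Rabs_triang |].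
  pose proof (Rmax_l (Rabs (u - x0)) (Rabs (v - y0))).
  pose proof (Rmax_r (Rabs (u - x0)) (Rabs (v - y0))).
  pose proof (cond_pos eps). nra.
Qed.

Lemma pderiv_app p l f : pderiv (p ++ l) f = pderiv p (pderiv l f).
Proof. induction p as [| b p IH]; simpl; [reflexivity | now rewrite IH]. Qed.

Fixpoint count_dx (w : list bool) : nat :=
  match w with nil => O | b :: w => if b then S (count_dx w) else count_dx w end.

Fixpoint count_dy (w : list bool) : nat :=
  match w with nil => O | b :: w => if b then count_dy w else S (count_dy w) end.

Lemma count_dx_dy w : (count_dx w + count_dy w = length w)%nat.
Proof. induction w as [| [|] w]; simpl; lia. Qed.

Fixpoint words (n : nat) : list (list bool) :=
  match n with
  | O => nil :: nil
  | S n => map (cons true) (words n) ++ map (cons false) (words n)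
  end.

Lemma length_in_words n w : In w (words n) -> length w = n.
Proof.
  revert w; induction n as [| n IH]; simpl; intros w Hw.
  - now destruct Hw as [<- | []].
  - apply in_app_or in Hw.
    destruct Hw as [Hw | Hw]; apply in_map_iff in Hw as [w' [<- Hw']]; simpl; now rewrite IH.
Qed.

Definition lsum {A : Type} (l : list A) (F : A -> R) : R :=
  fold_right (fun a acc => F a + acc) 0 l.

Lemma lsum_app {A} (l l' : list A) F : lsum (l ++ l') F = lsum l F + lsum l' F.
Proof. induction l as [| a l IH]; simpl; [ring | unfold lsum in *; simpl; rewrite IH; ring]. Qed.

Lemma lsum_map {A B} (h : A -> B) l F : lsum (map h l) F = lsum l (fun a => F (h a)).
Proof. induction l as [| a l IH]; [reflexivity | unfold lsum in *; simpl; now rewrite IH]. Qed.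

Lemma lsum_ext {A} (l : list A) F G : (forall a, In a l -> F a = G a) -> lsum l F = lsum l G.
Proof.
  induction l as [| a l IH]; intros H; [reflexivity |].
  unfold lsum in *; simpl. rewrite H by (left; reflexivity).
  rewrite IH; [reflexivity | intros b Hb; apply H; right; exact Hb].
Qed.

Lemma lsum_plus {A} (l : list A) F G : lsum l (fun a => F a + G a) = lsum l F + lsum l G.
Proof. induction l as [| a l IH]; simpl; [ring | unfold lsum in *; simpl; rewrite IH; ring]. Qed.

Lemma lsum_scal {A} (l : list A) c F : lsum l (fun a => c * F a) = c * lsum l F.
Proof. induction l as [| a l IH]; simpl; [ring | unfold lsum in *; simpl; rewrite IH; ring]. Qed.

Lemma is_derive_lsum {A} (l : list A) (F F' : A -> R -> R) r :
  (forall a, is_derive (F a) r (F' a r)) ->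
  is_derive (fun s => lsum l (fun a => F a s)) r (lsum l (fun a => F' a r)).
Proof.
  intros H. induction l as [| a l IH]; simpl.
  - apply is_derive_Reals, derivable_pt_lim_const.
  - apply (is_derive_plus (F a) (fun s => lsum l (fun a => F a s))); auto.
Qed.

Section SmoothFunction.

Variable f : R -> R -> R.
Hypothesis f_smooth : smooth2 f.

Lemma differentiable_pt_lim_pderiv w x y :
  differentiable_pt_lim (pderiv w f) x y (pderiv (true :: w) f x y) (pderiv (false :: w) f x y).
Proof.
  apply differentiable_pt_lim_of_partials.
  - intros u v. apply (f_smooth w u v).
  - apply (f_smooth (true :: w)).
  - apply Derive_correct, (f_smooth w x y).
Qed.

Lemma is_derive_pderiv_along_ray w t r :
  is_derive (fun s => pderiv w f s (s * t)) r
    (pderiv (true :: w) f r (r * t) + t * pderiv (false :: w) f r (r * t)).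
Proof.
  apply is_derive_Reals.
  replace (pderiv (true :: w) f r (r * t) + t * pderiv (false :: w) f r (r * t)) with
    (pderiv (true :: w) f r (r * t) * 1 + pderiv (false :: w) f r (r * t) * t) by ring.
  apply (derivable_pt_lim_comp_2d (pderiv w f) (fun s => s) (fun s => s * t)).
  - apply differentiable_pt_lim_pderiv.
  - apply derivable_pt_lim_id.
  - apply is_derive_Reals. auto_derive; [exact I | ring].
Qed.

Lemma pderiv_swap w : pderiv (true :: false :: w) f = pderiv (false :: true :: w) f.
Proof.
  apply functional_extensionality; intro x; apply functional_extensionality; intro y.
  apply (Schwarz (pderiv w f) x y).
  - exists (mkposreal 1 Rlt_0_1). intros u v _ _.
    repeat split; [apply (f_smooth w u v) | apply (f_smooth w u v) |
                   apply (f_smooth (false :: w) u v) | apply (f_smooth (true :: w) u v)].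
  - apply continuous2_continuity_2d_pt, (f_smooth (true :: false :: w)).
  - apply continuous2_continuity_2d_pt, (f_smooth (false :: true :: w)).
Qed.

Lemma pderiv_false_repeat_true i l :
  pderiv (false :: repeat true i ++ l) f = pderiv (repeat true i ++ false :: l) f.
Proof.
  induction i as [| i IH]; [reflexivity |].
  change (pderiv (false :: true :: repeat true i ++ l) f =
          pderiv ((true :: nil) ++ repeat true i ++ false :: l) f).
  rewrite <- pderiv_swap, pderiv_app, <- IH. reflexivity.
Qed.

Lemma pderiv_sorted w :
  pderiv w f = pderiv (repeat true (count_dx w) ++ repeat false (count_dy w)) f.
Proof.
  induction w as [| [|] w IH]; [reflexivity | |].
  - change (pderiv ((true :: nil) ++ w) f =
            pderiv ((true :: nil) ++ repeat true (count_dx w) ++ repeat false (count_dy w)) f).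
    rewrite pderiv_app, IH, <- pderiv_app. reflexivity.
  - change (pderiv ((false :: nil) ++ w) f =
            pderiv (repeat true (count_dx w) ++ false :: repeat false (count_dy w)) f).
    rewrite pderiv_app, IH, <- pderiv_app. apply pderiv_false_repeat_true.
Qed.

(* The chain rule along the ray, iterated without reordering derivatives: one term per word. *)
Definition ray_expansion t n r : R :=
  lsum (words n) (fun w => t ^ count_dy w * pderiv w f r (r * t)).

Lemma is_derive_ray_expansion t n r :
  is_derive (ray_expansion t n) r (ray_expansion t (S n) r).
Proof.
  replace (ray_expansion t (S n) r) with (lsum (words n) (fun w => t ^ count_dy w *
     (pderiv (true :: w) f r (r * t) + t * pderiv (false :: w) f r (r * t)))).
  - apply (is_derive_lsum (words n) (fun w s => t ^ count_dy w * pderiv w f s (s * t))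
      (fun w s => t ^ count_dy w *
         (pderiv (true :: w) f s (s * t) + t * pderiv (false :: w) f s (s * t)))).
    intros w. apply is_derive_scal, is_derive_pderiv_along_ray.
  - unfold ray_expansion. simpl. rewrite lsum_app, !lsum_map, <- lsum_plus.
    apply lsum_ext. intros w _. simpl. ring.
Qed.

Lemma Derive_n_along_ray t n r :
  Derive_n (fun s => f s (s * t)) n r = ray_expansion t n r.
Proof.
  revert r; induction n as [| n IH]; intros r.
  - unfold ray_expansion, lsum. simpl. ring.
  - simpl. rewrite (Derive_ext _ (ray_expansion t n)) by exact IH.
    apply is_derive_unique, is_derive_ray_expansion.
Qed.

Lemma along_ray_derivable_all_orders t : derivable_all_orders (fun s => f s (s * t)).
Proof.
  intros n r. apply (ex_derive_ext (ray_expansion t n)).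
  - intros s. symmetry. apply Derive_n_along_ray.
  - eexists. apply is_derive_ray_expansion.
Qed.

End SmoothFunction.

(* The binomial coefficient C(n, j) as a real, via Pascal's rule: it counts the words of
   length n with j letters [false]. *)
Fixpoint binom (n j : nat) : R :=
  match n, j with
  | O, O => 1
  | O, S _ => 0
  | S n, O => binom n O
  | S n, S j => binom n (S j) + binom n j
  end.

Lemma binom_nonneg n j : 0 <= binom n j.
Proof.
  revert j; induction n as [| n IH]; intros [| j]; simpl; try lra.
  - apply IH.
  - pose proof (IH (S j)); pose proof (IH j); lra.
Qed.

Lemma binom_ge1 n j : (j <= n)%nat -> 1 <= binom n j.
Proof.
  revert j; induction n as [| n IH]; intros [| j] Hj; simpl; try lra; try lia.
  - apply IH; lia.
  - pose proof (binom_nonneg n (S j)). pose proof (IH j ltac:(lia)). lra.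
Qed.

Lemma lsum_words_count_dy n (q : nat -> R) t M : (n <= M)%nat ->
  lsum (words n) (fun w => t ^ count_dy w * q (count_dy w)) =
  sum_f_R0 (fun j => binom n j * q j * t ^ j) M.
Proof.
  revert q M; induction n as [| n IH]; intros q M HM.
  - unfold lsum; simpl. induction M as [| M IHM]; simpl; [ring |].
    rewrite <- IHM by lia. ring.
  - destruct M as [| M]; [lia |].
    simpl words. rewrite lsum_app, !lsum_map. cbn [count_dy].
    rewrite (IH q (S M)) by lia.
    rewrite (lsum_ext _ _ (fun w => t * (t ^ count_dy w * q (S (count_dy w)))))
      by (intros; simpl; ring).
    rewrite lsum_scal, (IH (fun j => q (S j)) M) by lia.
    rewrite (decomp_sum _ (S M)) by lia. simpl pred.
    rewrite (decomp_sum (fun j => binom (S n) j * q j * t ^ j)) by lia. simpl pred.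
    rewrite scal_sum, Rplus_assoc, <- plus_sum. cbn [binom].
    f_equal. apply sum_eq. intros i _. simpl. ring.
Qed.

Lemma sum_pow_coef_eq0 M (c : nat -> R) :
  (forall t, 0 < t -> sum_f_R0 (fun j => c j * t ^ j) M = 0) ->
  forall j, (j <= M)%nat -> c j = 0.
Proof.
  revert c; induction M as [| M IH]; intros c Hc j Hj.
  - assert (j = O) as -> by lia. specialize (Hc 1 Rlt_0_1). simpl in Hc. lra.
  - assert (Hc0 : c O = 0).
    { transitivity (sum_f_R0 (fun j => c j * 0 ^ j) (S M)).
      - clear. induction M as [| M IH]; simpl in *; [ring | rewrite <- IH; ring].
      - apply (zeros_cluster_at_0_eq0 (fun t => sum_f_R0 (fun j => c j * t ^ j) (S M))).
        + apply continuity_pt_finite_SF. intros i _.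
          apply derivable_continuous_pt, ex_derive_Reals_0. auto_derive. exact I.
        + intros eps Heps. exists (eps / 2). split; [lra | apply Hc; lra]. }
    destruct j as [| j]; [exact Hc0 |].
    apply (IH (fun i => c (S i))); [| lia].
    intros t Ht. specialize (Hc t Ht).
    rewrite decomp_sum, Hc0 in Hc by lia. simpl pred in Hc.
    rewrite (sum_eq _ (fun i => c (S i) * t ^ i * t)) in Hc by (intros; simpl; ring).
    rewrite <- scal_sum, Rmult_0_l, Rplus_0_l in Hc.
    apply Rmult_integral in Hc as [Ht0 | Hsum]; [lra | exact Hsum].
Qed.

Lemma hawaiian_on_ray t k : (1 <= k)%nat ->
  hawaiian (2 / (INR k * (1 + t ^ 2))) (2 / (INR k * (1 + t ^ 2)) * t).
Proof.
  intros Hk. exists k. split; [exact Hk |].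
  assert (0 < INR k) by (apply lt_0_INR; lia).
  field. split; nra.
Qed.

Lemma along_ray_zeros_cluster (f : R -> R -> R) t :
  (forall x y, hawaiian x y -> f x y = 0) -> zeros_cluster_at_0 (fun s => f s (s * t)).
Proof.
  intros Hf eps Heps.
  destruct (INR_unbounded (2 / eps)) as [k Hk].
  assert (Hk_eps : 2 < eps * INR k).
  { apply (Rmult_lt_compat_l eps) in Hk; [| exact Heps].
    replace (eps * (2 / eps)) with 2 in Hk by (field; lra). exact Hk. }
  assert (Hk1 : (1 <= k)%nat).
  { destruct k; [simpl in Hk_eps; lra | lia]. }
  assert (HkR : 0 < INR k) by (apply lt_0_INR; lia).
  exists (2 / (INR k * (1 + t ^ 2))). split; [split | apply Hf, hawaiian_on_ray, Hk1].
  - apply Rdiv_lt_0_compat; nra.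
  - apply (Rmult_lt_reg_r (INR k * (1 + t ^ 2))); [nra |].
    unfold Rdiv. rewrite Rmult_assoc, Rinv_l by nra. nra.
Qed.

Lemma hawaiian_x_nonneg a b : hawaiian a b -> 0 <= a.
Proof.
  intros [k [Hk E]].
  assert (HkR : 0 < INR k) by (apply lt_0_INR; lia).
  assert (Hr : 0 < / INR k) by (apply Rinv_0_lt_compat, HkR).
  replace (/ INR k ^ 2) with ((/ INR k) ^ 2) in E by (field; lra).
  destruct (Rle_or_lt 0 a); [assumption | nra].
Qed.

(* The earring lies in the half-plane x >= 0 and passes through the origin. *)
Lemma dist_H_neg_x_axis s : 0 < s -> dist_H (- s) 0 = s.
Proof.
  intros Hs. unfold dist_H.
  rewrite (is_glb_Rbar_unique _ (Finite s)); [reflexivity |]. split.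
  - intros d [a [b [Hab ->]]]. simpl. pose proof (hawaiian_x_nonneg a b Hab).
    rewrite <- (sqrt_pow2 s) at 1 by lra. apply sqrt_le_1_alt. nra.
  - intros m Hm. apply Hm. exists 0, 0. split.
    + exists 1%nat. split; [lia | simpl; field].
    + replace ((- s - 0) ^ 2 + (0 - 0) ^ 2) with (s ^ 2) by ring. rewrite sqrt_pow2; lra.
Qed.

Lemma pderiv_at_origin_eq0 (f : R -> R -> R) :
  smooth2 f -> (forall x y, hawaiian x y -> f x y = 0) -> forall l, pderiv l f 0 0 = 0.
Proof.
  intros Hs Hf l.
  set (n := length l).
  set (q := fun j => pderiv (repeat true (n - j) ++ repeat false j) f 0 0).
  assert (Hpoly : forall t, 0 < t -> sum_f_R0 (fun j => binom n j * q j * t ^ j) n = 0).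
  { intros t _. rewrite <- lsum_words_count_dy by lia.
    transitivity (Derive_n (fun s => f s (s * t)) n 0).
    - rewrite Derive_n_along_ray by exact Hs. unfold ray_expansion.
      apply lsum_ext. intros w Hw. rewrite Rmult_0_l, (pderiv_sorted f Hs w). unfold q.
      pose proof (count_dx_dy w). pose proof (length_in_words n w Hw).
      replace (n - count_dy w)%nat with (count_dx w) by lia. reflexivity.
    - apply Derive_n_0_of_zeros_cluster.
      + apply along_ray_derivable_all_orders, Hs.
      + apply along_ray_zeros_cluster, Hf. }
  assert (Hdy : (count_dy l <= n)%nat) by (pose proof (count_dx_dy l); unfold n; lia).
  pose proof (sum_pow_coef_eq0 n _ Hpoly (count_dy l) Hdy) as Hcoef.
  pose proof (binom_ge1 n (count_dy l) Hdy).
  apply Rmult_integral in Hcoef as [Hbinom | Hq]; [lra |].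
  rewrite (pderiv_sorted f Hs l). unfold q in Hq.
  replace (count_dx l) with (n - count_dy l)%nat by (pose proof (count_dx_dy l); unfold n; lia).
  exact Hq.
Qed.

Lemma pow_le_Rpower_mul s theta N :
  0 < s < 1 -> theta + 1 <= INR N -> s ^ N <= Rpower s theta * s.
Proof.
  intros Hs HN.
  rewrite <- (Rpower_pow N s) by lra.
  replace (INR N) with (theta + (1 + (INR N - theta - 1))) by ring.
  rewrite !Rpower_plus, Rpower_1 by lra.
  assert (Hle1 : Rpower s (INR N - theta - 1) <= 1).
  { replace 1 with (Rpower 1 (INR N - theta - 1)) at 2
      by (unfold Rpower; rewrite ln_1, Rmult_0_r; apply exp_0).
    apply Rle_Rpower_l; lra. }
  apply Rmult_le_compat_l; [apply Rlt_le, exp_pos | nra].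
Qed.

Lemma no_lojasiewicz_of_flat_on_axis (f : R -> R -> R) :
  derivable_all_orders (fun s => f s 0) -> (forall n, Derive_n (fun s => f s 0) n 0 = 0) ->
  ~ (exists C theta delta, 0 < C /\ 0 < theta /\ 0 < delta /\
       forall x y, sqrt (x ^ 2 + y ^ 2) < delta ->
         C * rpow0 (dist_H x y) theta <= Rabs (f x y)).
Proof.
  intros Hsmooth Hflat [C [theta [delta [HC [Htheta [Hdelta Hloj]]]]]].
  destruct (INR_unbounded (theta + 1)) as [N HN].
  destruct (flat_pow_bound _ Hsmooth Hflat N) as [d [Hd Hbound]].
  set (s := Rmin (Rmin delta d) (Rmin 1 C) / 2).
  assert (Hs : 0 < s /\ s < delta /\ s < d /\ s < 1 /\ s < C).
  { unfold s.
    pose proof (Rmin_l (Rmin delta d) (Rmin 1 C)); pose proof (Rmin_r (Rmin delta d) (Rmin 1 C)).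
    pose proof (Rmin_l delta d); pose proof (Rmin_r delta d).
    pose proof (Rmin_l 1 C); pose proof (Rmin_r 1 C).
    assert (0 < Rmin (Rmin delta d) (Rmin 1 C)) by (repeat apply Rmin_pos; lra).
    lra. }
  specialize (Hloj (- s) 0). specialize (Hbound (- s)).
  rewrite Rabs_Ropp, Rabs_pos_eq in Hbound by lra.
  rewrite dist_H_neg_x_axis in Hloj by lra. unfold rpow0 in Hloj.
  destruct (Rle_dec s 0) as [| _]; [lra |].
  replace ((- s) ^ 2 + 0 ^ 2) with (s ^ 2) in Hloj by ring.
  rewrite sqrt_pow2 in Hloj by lra.
  pose proof (pow_le_Rpower_mul s theta N ltac:(lra) ltac:(lra)).
  assert (0 < Rpower s theta) by apply exp_pos.
  specialize (Hloj ltac:(lra)). specialize (Hbound ltac:(lra)).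
  nra.
Qed.

Theorem theorem5 (f : R -> R -> R) :
  smooth2 f ->
  (forall x y, f x y = 0 <-> hawaiian x y) ->
  (forall l : list bool, pderiv l f 0 0 = 0) /\
  ~ (exists C theta delta, 0 < C /\ 0 < theta /\ 0 < delta /\
       forall x y, sqrt (x ^ 2 + y ^ 2) < delta ->
         C * rpow0 (dist_H x y) theta <= Rabs (f x y)).
Proof.
  intros Hs Hzero.
  assert (Hvanish : forall x y, hawaiian x y -> f x y = 0) by (intros x y; apply Hzero).
  split; [exact (pderiv_at_origin_eq0 f Hs Hvanish) |].
  assert (Haxis : (fun s => f s (s * 0)) = (fun s => f s 0))
    by (apply functional_extensionality; intros s; now rewrite Rmult_0_r).
  apply no_lojasiewicz_of_flat_on_axis; rewrite <- Haxis.
  - apply along_ray_derivable_all_orders, Hs.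
  - apply Derive_n_0_of_zeros_cluster.
    + apply along_ray_derivable_all_orders, Hs.
    + apply along_ray_zeros_cluster, Hvanish.
Qed.
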